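(* Let $\Lambda$ be a block of bounded weights and $\Delta$ the block containing $\mathrm{cl}(\Lambda)$. If $\lambda\in\Delta\setminus\mathrm{cl}(\Lambda)$ and $\mu\ge\lambda$ in the Bruhat order, then $\mu\in\Delta\setminus\mathrm{cl}(\Lambda)$.
   Context: A number line carries vertices indexed by a finite set of consecutive integers here. A (bounded) weight labels each vertex by $\circ,\times,\vee,\wedge$. Bruhat order: generated by declaring that interchanging a $\vee$ with an $\wedge$ to its right makes a weight bigger. A block is an equivalence class of weights under permuting $\vee$'s and $\wedge$'s. For a block $\Lambda$ of bounded weights, each having $p$ labels $\wedge$ and $q$ labels $\vee$, the closure $\mathrm{cl}(\lambda)$ of $\lambda\in\Lambda$ is the weight obtained by adding $p$ new vertices labelled $\vee$ at the left end of the number line and $q$ new vertices labelled $\wedge$ at the right end; $\mathrm{cl}(\Lambda)=\{\mathrm{cl}(\lambda)\mid\lambda\in\Lambda\}$. *)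

From HB Require Import structures.
From mathcomp Require Import all_boot.
Set Implicit Arguments. Unset Strict Implicit. Unset Printing Implicit Defensive.

Inductive label := Circ | Cross | Down | Up.

Definition label_code (l : label) : nat :=
  match l with Circ => 0 | Cross => 1 | Down => 2 | Up => 3 end.
Definition code_label (n : nat) : label :=
  match n with 0 => Circ | 1 => Cross | 2 => Down | _ => Up end.
Lemma label_codeK : cancel label_code code_label. Proof. by case. Qed.
HB.instance Definition _ := Equality.copy label (can_type label_codeK).

(* A bounded weight: labels of the vertices of a finite number line of
   consecutive integers, listed from left to right. *)
Definition weight := seq label.

Definition core (l : label) : nat :=
  match l with Circ => 0 | Cross => 1 | Down | Up => 2 end.

Definition same_block (lam mu : weight) : bool :=
  (map core lam == map core mu) && perm_eq lam mu.

Definition bruhat_step (lam mu : weight) : Prop :=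
  exists i j, [/\ i < j, j < size lam, nth Circ lam i = Down,
    nth Circ lam j = Up &
    mu = set_nth Circ (set_nth Circ lam i Up) j Down].

(* Bruhat order: reflexive-transitive wclosure; bruhat_le lam mu means lam <= mu. *)
Inductive bruhat_le : weight -> weight -> Prop :=
| bruhat_refl lam : bruhat_le lam lam
| bruhat_trans lam nu mu : bruhat_step lam nu -> bruhat_le nu mu -> bruhat_le lam mu.

Definition wclosure (lam : weight) : weight :=
  nseq (count_mem Up lam) Down ++ lam ++ nseq (count_mem Down lam) Up.

From mathcomp Require Import all_boot zify.

(* A weight of the block of cl(lam0) lies in cl(Lambda) exactly when its first
   p vertices are labelled \/ and its last q vertices /\ (p and q count the /\'s
   and \/'s of lam0).  A Bruhat step replaces a \/ ... /\ pair by /\ ... \/; if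
   the result still has this frame, the swapped pair lies strictly inside it, so
   the weight before the step had the frame as well.  Steps preserve the block,
   so going up in the Bruhat order can never re-enter cl(Lambda). *)

Set Implicit Arguments.
Unset Strict Implicit.
Unset Printing Implicit Defensive.

Lemma set_nth_catr (T : Type) (x0 : T) s t n y :
  set_nth x0 (s ++ t) (size s + n) y = s ++ set_nth x0 t n y.
Proof. by elim: s => //= x s ->. Qed.

Lemma take_nth_drop (T : Type) (x0 : T) s i : i < size s ->
  s = take i s ++ nth x0 s i :: drop i.+1 s.
Proof. by move=> hi; rewrite -drop_nth ?cat_take_drop. Qed.

Lemma bruhat_step_cat lam mu : bruhat_step lam mu ->
  exists a b c, lam = a ++ Down :: b ++ Up :: c /\ mu = a ++ Up :: b ++ Down :: c.
Proof.
case=> i [j [lt_ij lt_j lam_i lam_j ->]].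
have lt_i : i < size lam by apply: ltn_trans lt_j.
set a := take i lam; set d := drop i.+1 lam.
have size_a : size a = i by rewrite size_takel // ltnW.
have lam_ad : lam = a ++ Down :: d by rewrite {1}(take_nth_drop Circ lt_i) lam_i.
have lt_jd : j - i.+1 < size d by rewrite size_drop; lia.
have d_j : nth Circ d (j - i.+1) = Up by rewrite nth_drop subnKC.
set b := take (j - i.+1) d; set c := drop (j - i.+1).+1 d.
have size_b : size b = j - i.+1 by rewrite size_takel // ltnW.
have d_bc : d = b ++ Up :: c by rewrite {1}(take_nth_drop Circ lt_jd) d_j.
have ej : j = size a + (size b).+1 by rewrite size_a size_b; lia.
exists a, b, c; split; first by rewrite lam_ad d_bc.
rewrite {1}lam_ad -[i]addn0 -size_a set_nth_catr /= ej set_nth_catr /= d_bc.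
by rewrite -[size b]addn0 set_nth_catr.
Qed.

Lemma same_block_trans : transitive same_block.
Proof.
move=> mu lam nu /andP [/eqP core_lm perm_lm] /andP [/eqP core_mn perm_mn].
by rewrite /same_block core_lm core_mn eqxx (perm_trans perm_lm).
Qed.

Lemma same_block_cat2 s t u v :
  same_block (s ++ u ++ t) (s ++ v ++ t) = same_block u v.
Proof.
rewrite /same_block perm_cat2l perm_cat2r.
have [/perm_size size_uv | _] := boolP (perm_eq u v); last by rewrite !andbF.
by rewrite !map_cat !eqseq_cat ?size_map ?size_uv // !eqxx /= andbT.
Qed.

Lemma same_block_swap a b c :
  same_block (a ++ Down :: b ++ Up :: c) (a ++ Up :: b ++ Down :: c).
Proof.
have cat_mid x y : a ++ x :: b ++ y :: c = a ++ (x :: b ++ [:: y]) ++ c.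
  by rewrite /= -catA.
rewrite !cat_mid same_block_cat2; apply/andP; split; first by rewrite /= !map_cat.
by apply/permP => P; rewrite /= !count_cat /=; lia.
Qed.

Lemma same_block_bruhat_le lam mu : bruhat_le lam mu -> same_block lam mu.
Proof.
elim=> [w | w nu {}mu /bruhat_step_cat [a [b [c [-> ->]]]] _].
  by rewrite /same_block eqxx perm_refl.
exact/same_block_trans/same_block_swap.
Qed.

Lemma take_swap_nseq (T : eqType) (x y : T) a b c k : x != y ->
  take k (a ++ y :: b ++ x :: c) = nseq k x ->
  take k (a ++ x :: b ++ y :: c) = nseq k x.
Proof.
move=> neq_xy; have [le_ka | lt_ak] := leqP k (size a); first by rewrite !takel_cat.
rewrite take_cat ltnNge (ltnW lt_ak) -(subnSK lt_ak) /= => take_eq.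
have : y \in nseq k x by rewrite -take_eq mem_cat mem_head orbT.
by rewrite mem_nseq eq_sym (negbTE neq_xy) andbF.
Qed.

Definition framed (p q : nat) (w : weight) : Prop :=
  take p w = nseq p Down /\ take q (rev w) = nseq q Up.

Lemma framed_bruhat_step p q lam mu :
  bruhat_step lam mu -> framed p q mu -> framed p q lam.
Proof.
case/bruhat_step_cat=> [a [b [c [-> ->]]]] [take_mu rev_mu]; split.
  exact: take_swap_nseq take_mu.
move: rev_mu; rewrite !(rev_cat, rev_cons) -!cats1 -!catA /=.
exact: take_swap_nseq.
Qed.

Lemma framed_bruhat_le p q lam mu :
  bruhat_le lam mu -> framed p q mu -> framed p q lam.
Proof.
elim=> // w nu {}mu step_w _ IH /IH; exact: framed_bruhat_step.
Qed.

Lemma framed_cat p q m : framed p q (nseq p Down ++ m ++ nseq q Up).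
Proof.
split; first by rewrite take_size_cat ?size_nseq.
by rewrite !rev_cat rev_nseq -catA take_size_cat ?size_nseq.
Qed.

Lemma framedP p q w : p + q <= size w -> framed p q w ->
  exists m, w = nseq p Down ++ m ++ nseq q Up.
Proof.
move=> le_pq_w [take_w rev_w]; set r := drop p w.
have w_r : w = nseq p Down ++ r by rewrite -take_w cat_take_drop.
have take_r : take q (rev r) = nseq q Up.
  by rewrite -rev_w w_r rev_cat takel_cat // size_rev size_drop; lia.
exists (rev (drop q (rev r))); rewrite {1}w_r; congr (_ ++ _).
by apply: (can_inj revK); rewrite rev_cat revK rev_nseq -take_r cat_take_drop.
Qed.

Lemma wclosure_same_block lam0 nu : same_block lam0 nu ->
  wclosure nu = nseq (count_mem Up lam0) Down ++ nu ++ nseq (count_mem Down lam0) Up.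
Proof. by case/andP=> _ /permP count_nu; rewrite /wclosure !count_nu. Qed.

Lemma closure_blockP lam0 w :
  (exists nu, same_block lam0 nu /\ w = wclosure nu) <->
  same_block (wclosure lam0) w /\ framed (count_mem Up lam0) (count_mem Down lam0) w.
Proof.
set p := count_mem Up lam0; set q := count_mem Down lam0.
split=> [[nu [blk_nu ->]] | [blk_w framed_w]].
  rewrite (wclosure_same_block blk_nu) same_block_cat2; split=> //.
  exact: framed_cat.
have /andP [_ /perm_size size_w] := blk_w.
have [m w_m] : exists m, w = nseq p Down ++ m ++ nseq q Up.
  by apply: framedP framed_w; rewrite -size_w !size_cat !size_nseq; lia.
have blk_m : same_block lam0 m by rewrite -(same_block_cat2 (nseq p Down) (nseq q Up)) -w_m.
by exists m; rewrite (wclosure_same_block blk_m) w_m.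
Qed.

Theorem lemma4p1 (lam0 lam mu : weight) :
  same_block (wclosure lam0) lam ->
  ~ (exists nu, same_block lam0 nu /\ lam = wclosure nu) ->
  bruhat_le lam mu ->
  same_block (wclosure lam0) mu /\ ~ (exists nu, same_block lam0 nu /\ mu = wclosure nu).
Proof.
move=> blk_lam lam_out le_lam_mu.
have blk_mu := same_block_trans blk_lam (same_block_bruhat_le le_lam_mu).
split=> // /closure_blockP [_ framed_mu]; apply: lam_out.
by apply/closure_blockP; split; last exact: framed_bruhat_le framed_mu.
Qed.
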